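(* Let $m \equiv 1 \pmod 4$ with $m > 1$, $n = 3^m - 1$, $v = (3^{(m+1)/2}-1)/2$ and $\delta = (3^{(m-1)/2}+5)/2$. Then $\gcd(v,n) = 1$, and, setting $T_{(2,3,m)}(v) = \{ vi \bmod n : i \in T_{(2,3,m)}\}$, we have $\{n-(\delta-1), \ldots, n-2, n-1\} \subseteq T_{(2,3,m)}(v)$.
   Context: For an integer $0 \le j \le n-1$ with $3$-adic expansion $j = \sum_{t=0}^{m-1} j_t 3^t$, $j_t \in \{0,1,2\}$, let $w_3(j) = \sum_{t=0}^{m-1} j_t$. For distinct $i_1,i_2 \in \{0,1,2,3\}$, $T_{(i_1,i_2,m)} = \{1 \le j \le n-1 : w_3(j) \equiv i_1 \text{ or } i_2 \pmod 4\}$. For an integer $b$, $b \bmod n$ is the unique $b_0 \in \{0,\ldots,n-1\}$ with $b \equiv b_0 \pmod n$. *)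

From mathcomp Require Import all_boot.
Set Implicit Arguments. Unset Strict Implicit. Unset Printing Implicit Defensive.

Definition digit3 (j t : nat) : nat := (j %/ 3 ^ t) %% 3.

Definition w3 (m j : nat) : nat := \sum_(0 <= t < m) digit3 j t.

Definition T_set (i1 i2 m : nat) : pred nat :=
  fun j => (1 <= j <= (3 ^ m - 1) - 1) &&
           ((w3 m j %% 4 == i1) || (w3 m j %% 4 == i2)).

Definition T_scaled (i1 i2 m v : nat) : pred nat :=
  fun k => [exists i : 'I_(3 ^ m - 1), T_set i1 i2 m i && (k == (v * i) %% (3 ^ m - 1))].

From mathcomp Require Import all_boot zify.

Set Implicit Arguments.
Unset Strict Implicit.
Unset Printing Implicit Defensive.

(* Write m = t + 1 + t with t even and put x = 3^t, so that x = 1 (mod 4),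
   v = (3x - 1)/2, n = 3x^2 - 1 and delta - 1 = (x + 3)/2.  The integer
   i = a + x (d + 3a), whose 3-adic digit string is the block a, the digit d
   and the block a again, has weight 2 w_3(a) + d = 2a + d (mod 4), and since
   3x^2 = 1 (mod n) it satisfies 2 v i = d + 2a - d x (mod n).  For even j the choice d = 2,
   a = x - 1 - j, and for odd j < (x + 1)/2 the choice d = 1, a = (x - 1)/2 - j,
   give v i = n - j (mod n) with i in T_(2,3,m).  The remaining j = (x + 1)/2 is
   reached from i = n - 2x - 1 = (x - 2) + 3x (x - 1), of weight 4t - 1.
   Coprimality follows from 2v (3x + 1) = 3n + 2 with v odd. *)

Lemma digit3_concat t1 a b t : a < 3 ^ t1 ->
  digit3 (a + 3 ^ t1 * b) t = if t < t1 then digit3 a t else digit3 b (t - t1).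
Proof.
move=> a_lt; rewrite /digit3; case: ifP => t_lt.
  have -> : 3 ^ t1 = 3 ^ (t1 - t).-1 * 3 * 3 ^ t.
    by rewrite -expnSr prednK ?subn_gt0 // -expnD subnK // ltnW.
  by rewrite mulnAC addnC divnMDl ?expn_gt0 // mulnAC modnMDl.
have -> : 3 ^ t = 3 ^ t1 * 3 ^ (t - t1) by rewrite -expnD subnKC // leqNgt t_lt.
by rewrite divnMA addnC mulnC divnMDl ?expn_gt0 // (divn_small a_lt) addn0.
Qed.

Lemma w3_concat t1 t2 a b : a < 3 ^ t1 ->
  w3 (t1 + t2) (a + 3 ^ t1 * b) = w3 t1 a + w3 t2 b.
Proof.
move=> a_lt; rewrite /w3 (@big_cat_nat _ _ _ t1) ?leq_addr //=; congr (_ + _).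
  by apply: eq_big_nat => t /andP [_ t_lt]; rewrite digit3_concat // t_lt.
rewrite -{1}(add0n t1) big_addn addKn; apply: eq_big_nat => t _.
by rewrite digit3_concat // ltnNge leq_addl addnK.
Qed.

Lemma w3_digit d : d < 3 -> w3 1 d = d.
Proof. by move=> d_lt; rewrite /w3 big_nat1 /digit3 expn0 divn1 modn_small. Qed.

Lemma w3_block t a d c : a < 3 ^ t -> d < 3 ->
  w3 (t + 1 + t) (a + 3 ^ t * (d + 3 * c)) = w3 t a + d + w3 t c.
Proof.
move=> a_lt d_lt; rewrite -addnA w3_concat // -[3 * c]/(3 ^ 1 * c).
by rewrite w3_concat // w3_digit // addnA.
Qed.

Lemma odd_w3 t a : a < 3 ^ t -> odd (w3 t a) = odd a.
Proof.
elim: t a => [|t IH] a a_lt.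
  by move: a_lt; rewrite expn0 ltnS leqn0 => /eqP ->; rewrite /w3 big_geq.
have a_split : a = a %% 3 + 3 ^ 1 * (a %/ 3) by rewrite expn1 mulnC addnC -divn_eq.
have q_lt : a %/ 3 < 3 ^ t by rewrite ltn_divLR // mulnC -expnS.
rewrite a_split -add1n w3_concat ?expn1 ?ltn_mod // w3_digit ?ltn_mod //.
have := IH _ q_lt; move: (a %% 3) (a %/ 3) (w3 t (a %/ 3)) => r q w; lia.
Qed.

Lemma w3_expnB1 t : w3 t (3 ^ t - 1) = 2 * t.
Proof.
elim: t => [|t IH]; first by rewrite /w3 big_geq.
have -> : 3 ^ t.+1 - 1 = 2 + 3 ^ 1 * (3 ^ t - 1).
  by have := expn_gt0 3 t; rewrite expnS expn1; lia.
by rewrite -add1n w3_concat // w3_digit // IH; lia.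
Qed.

Lemma w3_expnB2 t : 0 < t -> w3 t (3 ^ t - 2) = (2 * t).-1.
Proof.
case: t => // t _.
have -> : 3 ^ t.+1 - 2 = 1 + 3 ^ 1 * (3 ^ t - 1).
  by have := expn_gt0 3 t; rewrite expnS expn1; lia.
by rewrite -add1n w3_concat // w3_digit // w3_expnB1; lia.
Qed.

Lemma w3_repeat_mod4 t a d : a < 3 ^ t -> d < 3 ->
  w3 (t + 1 + t) (a + 3 ^ t * (d + 3 * a)) %% 4 = (2 * a + d) %% 4.
Proof.
move=> a_lt d_lt; rewrite w3_block //.
by have := odd_w3 a_lt; move: (w3 t a) => w; lia.
Qed.

Lemma modn_sub_of_dvd n a j : n %| a + j -> 0 < j <= n -> a %% n = n - j.
Proof.
move=> /dvdnP [[|K] aj_eq] j_bounds; first lia.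
have -> : a = K * n + (n - j) by rewrite mulSn in aj_eq; lia.
by rewrite modnMDl modn_small //; lia.
Qed.

Lemma coprime_of_odd_mul_eq v n b c : odd v -> v * b = c * n + 2 -> coprime v n.
Proof.
move=> v_odd vb_eq; have v_coprime2 : coprime v 2 by rewrite coprimen2.
rewrite /coprime -dvdn1 -(eqP v_coprime2) dvdn_gcd dvdn_gcdl /=.
rewrite -(dvdn_addr 2 (dvdn_mull c (dvdn_gcdr v n))) -vb_eq.
exact: dvdn_mulr (dvdn_gcdl v n).
Qed.

Lemma T_scaled_witness m v i : 0 < i < 3 ^ m - 1 -> 2 <= w3 m i %% 4 ->
  T_scaled 2 3 m v (v * i %% (3 ^ m - 1)).
Proof.
move=> /andP [i_gt0 i_lt] w_ge; apply/existsP; exists (Ordinal i_lt).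
rewrite /T_set /= i_gt0 eqxx andbT /=; apply/andP; split; first lia.
by have := ltn_mod (w3 m i) 4; lia.
Qed.

Lemma repeat_scale_eq v x n a d j K :
    2 * v + 1 = 3 * x -> n + 1 = 3 * (x * x) ->
    2 * j + d + 2 * a = d * x -> d + 3 * a = 2 * K ->
  v * (a + x * (d + 3 * a)) + j = K * n.
Proof.
move=> v_eq n_succ j_eq K_eq.
have := congr1 (muln (a + x * (d + 3 * a))) v_eq; have := congr1 (muln d) n_succ.
have := congr1 (muln a) n_succ; have := congr1 (muln n) K_eq; nia.
Qed.

Lemma exceptional_scale_eq v x n j :
    2 * v + 1 = 3 * x -> n + 1 = 3 * (x * x) -> 2 * j = x + 1 -> 2 <= x ->
  v * (x - 2 + x * (0 + 3 * (x - 1))) + j = (v - 1) * n.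
Proof.
move=> v_eq n_succ j_eq x_ge.
have i_eq : x - 2 + x * (0 + 3 * (x - 1)) + (2 * x + 1) = n.
  move: n_succ x_ge; clear; case: x => [|[|y]] //= n_succ _.
  by rewrite !subSS subn0 add0n; nia.
have v_eq' : v * (2 * x + 1) = n + j.
  by have := congr1 (muln (2 * x + 1)) v_eq; move: n_succ j_eq; clear; nia.
move: (x - 2 + _) i_eq => i i_eq.
by have := congr1 (muln v) i_eq; rewrite mulnBl mul1n; move: v_eq'; clear; lia.
Qed.

Lemma expn3_block t : 3 ^ (t + 1 + t) = 3 * (3 ^ t * 3 ^ t).
Proof. by rewrite -addnA !expnD expn1 mulnCA. Qed.

Section Witnesses.

Variables t v : nat.
Let x := 3 ^ t.
Hypothesis v_eq : 2 * v + 1 = 3 * x.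

Let n := 3 ^ (t + 1 + t) - 1.

Let n_succ : n + 1 = 3 * (x * x).
Proof. by rewrite /n /x expn3_block subnK // !muln_gt0 expn_gt0. Qed.

Lemma repeat_witness a d j : 0 < d < 3 -> 0 < j -> 2 * j + d + 2 * a = d * x ->
  2 <= (2 * a + d) %% 4 -> T_scaled 2 3 (t + 1 + t) v (n - j).
Proof.
move=> d_bounds j_gt0 j_eq w_ge; set i := a + x * (d + 3 * a).
have a_lt : a.+1 < x by nia.
have [K K_eq] : exists K, d + 3 * a = 2 * K by exists (d + 3 * a)./2; lia.
have -> : n - j = v * i %% n.
  rewrite (@modn_sub_of_dvd _ _ j) //; last by have := n_succ; clearbody x n; nia.
  by apply/dvdnP; exists K; apply: repeat_scale_eq.
apply: T_scaled_witness.
  by rewrite -/n /i; have := n_succ; clearbody x n; nia.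
by rewrite w3_repeat_mod4 //; lia.
Qed.

Lemma exceptional_witness j : 0 < t -> 2 * j = x + 1 -> T_scaled 2 3 (t + 1 + t) v (n - j).
Proof.
move=> t_gt0 j_eq; have x_ge : 3 <= x by rewrite /x -(expn1 3) leq_exp2l.
set i := x - 2 + x * (0 + 3 * (x - 1)).
have -> : n - j = v * i %% n.
  rewrite (@modn_sub_of_dvd _ _ j) //; last by lia.
  by apply/dvdnP; exists (v - 1); apply: exceptional_scale_eq => //; lia.
apply: T_scaled_witness.
  by rewrite -/n /i; have := n_succ; clearbody x n; nia.
rewrite w3_block //; last by rewrite /x; lia.
by rewrite w3_expnB2 // w3_expnB1; lia.
Qed.

End Witnesses.

Theorem lemma7 (m : nat) :
  m %% 4 = 1 -> 1 < m ->
  let n := 3 ^ m - 1 in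
  let v := (3 ^ ((m + 1) %/ 2) - 1) %/ 2 in
  let delta := (3 ^ ((m - 1) %/ 2) + 5) %/ 2 in
  coprime v n /\
  (forall k, n - (delta - 1) <= k <= n - 1 -> T_scaled 2 3 m v k).
Proof.
move=> m_mod4 m_gt1.
have [s s_gt0 ->] : exists2 s, 0 < s & m = 2 * s + 1 + 2 * s by exists (m %/ 4); lia.
move=> n v delta; set x := 3 ^ (2 * s).
have x_gt1 : 1 < x by rewrite /x (ltn_exp2l 0) // muln_gt0.
have x_mod4 : x %% 4 = 1 by rewrite /x expnM -modnXm (_ : 3 ^ 2 %% 4 = 1) // exp1n.
have v_eq : 2 * v + 1 = 3 * x.
  by rewrite /v (_ : (2 * s + 1 + 2 * s + 1) %/ 2 = (2 * s).+1) ?expnS -/x; lia.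
have delta_eq : 2 * (delta - 1) = x + 3.
  by rewrite /delta (_ : (2 * s + 1 + 2 * s - 1) %/ 2 = 2 * s) -/x; lia.
have n_succ : n + 1 = 3 * (x * x).
  by rewrite /n expn3_block subnK // !muln_gt0 expn_gt0.
split.
  apply: (@coprime_of_odd_mul_eq _ _ (2 * (3 * x + 1)) 3); first lia.
  by have := congr1 (muln (3 * x + 1)) v_eq; move: n_succ; clearbody n; nia.
move=> k k_bounds.
have [j [[j_gt0 j_le] ->]] : exists j, (0 < j /\ 2 * j <= x + 3) /\ k = n - j.
  by exists (n - k); lia.
have [j_odd | j_even] := boolP (odd j).
  have [j_lt | j_eq] : 2 * j < x + 1 \/ 2 * j = x + 1 by lia.
    by apply: (repeat_witness v_eq (a := (x - 1) %/ 2 - j) (d := 1)) => //; lia.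
  by apply: (exceptional_witness v_eq _ j_eq); lia.
by apply: (repeat_witness v_eq (a := x - 1 - j) (d := 2)) => //; lia.
Qed.
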